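(* Let $(\mathcal{X},d)$ be a metric space with the following barycenter property: for every $K\ge1$, every $\boldsymbol{w}\in\Delta^{K-1}$ and every $\boldsymbol{a}=(a_1,\dots,a_K)\in\mathcal{X}^K$ the function $C\mapsto\sum_{s=1}^K w_s d^2(a_s,C)$ attains its minimum on $\mathcal{X}$. Let $\boldsymbol{a}=(a_1,\dots,a_K)\in\mathcal{X}^K$, $\boldsymbol{w}\in\Delta^{K-1}$, and let $C_{\boldsymbol{a}}\in\arg\min_{C\in\mathcal{X}}\sum_{s=1}^K w_s d^2(a_s,C)$. Fix $\alpha\in[0,1]$ and assume $\boldsymbol{b}=(b_1,\dots,b_K)\in\mathcal{X}^K$ satisfies, for all $s=1,\dots,K$, $$d(a_s,C_{\boldsymbol{a}})=d(a_s,b_s)+d(b_s,C_{\boldsymbol{a}}),\qquad d(b_s,a_s)=(1-\alpha^{1/2})\,d(a_s,C_{\boldsymbol{a}}).$$ Then $\boldsymbol{b}$ is a solution of $$\inf_{\boldsymbol{b}'\in\mathcal{X}^K}\Big\{\sum_{s=1}^K w_s d^2(b'_s,a_s)\;:\;\min_{C\in\mathcal{X}}\sum_{s=1}^K w_s d^2(b'_s,C)\le\alpha\sum_{s=1}^K w_s d^2(a_s,C_{\boldsymbol{a}})\Big\}.$$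
   Context: $\Delta^{K-1}$ denotes the probability simplex in $\mathbb{R}^K$. In the constraint, $\min_{C}\sum_s w_s d^2(b'_s,C)$ equals $\sum_s w_s d^2(b'_s,C_{\boldsymbol{b}'})$ for any weighted barycenter $C_{\boldsymbol{b}'}$ of $\boldsymbol{b}'$. *)

From HB Require Import structures.
From mathcomp Require Import all_boot all_order all_algebra.
From mathcomp Require Import reals.
Set Implicit Arguments. Unset Strict Implicit. Unset Printing Implicit Defensive.
Import Order.TTheory GRing.Theory Num.Theory.
Local Open Scope ring_scope.

Definition is_metric (R : realType) (X : Type) (d : X -> X -> R) : Prop :=
  [/\ (forall x y, 0 <= d x y),
      (forall x y, d x y = 0 <-> x = y),
      (forall x y, d x y = d y x) &
      (forall x y z, d x z <= d x y + d y z)].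

Definition in_simplex (R : realType) (K : nat) (w : 'I_K -> R) : Prop :=
  (forall s, 0 <= w s) /\ \sum_(s < K) w s = 1.

Definition wcost (R : realType) (X : Type) (d : X -> X -> R) (K : nat)
  (w : 'I_K -> R) (a : 'I_K -> X) (C : X) : R :=
  \sum_(s < K) w s * d (a s) C ^+ 2.

Definition is_barycenter (R : realType) (X : Type) (d : X -> X -> R) (K : nat)
  (w : 'I_K -> R) (a : 'I_K -> X) (C : X) : Prop :=
  forall C', wcost d w a C <= wcost d w a C'.

Definition barycenter_property (R : realType) (X : Type) (d : X -> X -> R) : Prop :=
  forall (K : nat), (1 <= K)%N -> forall (w : 'I_K -> R) (a : 'I_K -> X),
    in_simplex w -> exists C, is_barycenter d w a C.

Definition feasible (R : realType) (X : Type) (d : X -> X -> R) (K : nat)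
  (w : 'I_K -> R) (t : R) (b : 'I_K -> X) : Prop :=
  exists C, is_barycenter d w b C /\ wcost d w b C <= t.

Definition objective (R : realType) (X : Type) (d : X -> X -> R) (K : nat)
  (w : 'I_K -> R) (a b : 'I_K -> X) : R :=
  \sum_(s < K) w s * d (b s) (a s) ^+ 2.

Definition solves (R : realType) (X : Type) (d : X -> X -> R) (K : nat)
  (w : 'I_K -> R) (a : 'I_K -> X) (t : R) (b : 'I_K -> X) : Prop :=
  feasible d w t b /\
  forall b' : 'I_K -> X, feasible d w t b' -> objective d w a b <= objective d w a b'.

(** Write β := √α.  Every b_s lies on a geodesic from a_s to C_a at distance β d(a_s, C_a)
    from C_a, so b costs (1 - β)² D, where D is the barycentric cost of a, and is feasible
    through the candidate centre C_a.  Conversely, if b' is feasible with barycenter C',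
    the triangle inequality d(a_s, C') <= d(b'_s, a_s) + d(b'_s, C') and the identity
    q x² + p y² = p q (x + y)² + (q x - p y)² (p + q = 1) give, for p = 1 - β, q = β,
      p q D <= p q Σ w_s d²(a_s, C') <= q·obj(b') + p·β² D,
    which rearranges to obj(b') >= (1 - β)² D when β > 0; when β = 0 the centre C'
    coincides with each b'_s of positive weight and obj(b') >= Σ w_s d²(a_s, C') >= D. *)
From HB Require Import structures.
From mathcomp Require Import all_boot all_order all_algebra.
From mathcomp Require Import reals.
From mathcomp Require Import ring lra.
Import Order.TTheory GRing.Theory Num.Theory.
Local Open Scope ring_scope.

Lemma convex_sqrD_bound {R : realFieldType} {p q u x y : R} :
  0 <= p -> 0 <= q -> p + q = 1 -> 0 <= u -> u <= x + y ->
  p * q * u ^+ 2 <= q * x ^+ 2 + p * y ^+ 2.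
Proof.
move=> p_ge0 q_ge0 pq1 u_ge0 u_le.
have sq_le : u ^+ 2 <= (x + y) ^+ 2 by nra.
have -> : q * x ^+ 2 + p * y ^+ 2 = p * q * (x + y) ^+ 2 + (q * x - p * y) ^+ 2.
  by rewrite (_ : q = 1 - p); [ring | lra].
have := ler_wpM2l (mulr_ge0 p_ge0 q_ge0) sq_le; have := sqr_ge0 (q * x - p * y); lra.
Qed.

Lemma sum_sqr_scale {R : realFieldType} {K : nat} (w : 'I_K -> R) {f g : 'I_K -> R} {k : R} :
  (forall s, f s = k * g s) ->
  \sum_(s < K) w s * f s ^+ 2 = k ^+ 2 * \sum_(s < K) w s * g s ^+ 2.
Proof. by move=> fE; rewrite mulr_sumr; apply: eq_bigr => s _; rewrite fE; ring. Qed.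

Section WeightedCosts.

Context {R : realType} {X : Type} {d : X -> X -> R} (hd : is_metric d).
Context {K : nat} {w : 'I_K -> R} (w_ge0 : forall s, 0 <= w s).

Lemma wcost_ge0 (a : 'I_K -> X) (C : X) : 0 <= wcost d w a C.
Proof. by rewrite sumr_ge0 // => s _; rewrite mulr_ge0 ?sqr_ge0. Qed.

Lemma dist_triangle_sym (a b : X) (C : X) : d a C <= d b a + d b C.
Proof. by case: hd => _ _ dC dT; rewrite [d b a]dC. Qed.

Lemma wcost_interpolate {p q : R} (a b : 'I_K -> X) (C : X) :
  0 <= p -> 0 <= q -> p + q = 1 ->
  p * q * wcost d w a C <= q * objective d w a b + p * wcost d w b C.
Proof.
move=> p_ge0 q_ge0 pq1; rewrite /wcost /objective !mulr_sumr -big_split /=.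
apply: ler_sum => s _.
have [d_ge0 _ _ _] := hd.
rewrite mulrCA !(mulrCA _ (w s)) -mulrDr ler_wpM2l //.
exact: convex_sqrD_bound p_ge0 q_ge0 pq1 (d_ge0 (a s) C) (dist_triangle_sym (a s) (b s) C).
Qed.

Lemma wcost_le_objective (a b : 'I_K -> X) (C : X) :
  wcost d w b C = 0 -> wcost d w a C <= objective d w a b.
Proof.
move=> wcost0; have [d_ge0 _ _ _] := hd.
have term0 := psumr_eq0P (fun s _ => mulr_ge0 (w_ge0 s) (sqr_ge0 (d (b s) C))) wcost0.
apply: ler_sum => s _.
have wd0 : w s * d (b s) C = 0.
  by apply/eqP; rewrite -sqrf_eq0 exprMn expr2 -mulrA term0 ?mulr0.
have sq_le : d (a s) C ^+ 2 <= (d (b s) (a s) + d (b s) C) ^+ 2.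
  by have := dist_triangle_sym (a s) (b s) C; have := d_ge0 (a s) C; nra.
apply: (le_trans (ler_wpM2l (w_ge0 s) sq_le)).
have -> : w s * (d (b s) (a s) + d (b s) C) ^+ 2 =
          w s * d (b s) (a s) ^+ 2 + w s * d (b s) C * (2 * d (b s) (a s) + d (b s) C).
  by ring.
by rewrite wd0 mul0r addr0.
Qed.

Lemma objective_lower_bound {beta D : R} (a b : 'I_K -> X) (C : X) :
  0 <= beta <= 1 -> D <= wcost d w a C ->
  wcost d w b C <= beta ^+ 2 * D -> (1 - beta) ^+ 2 * D <= objective d w a b.
Proof.
case/andP=> beta_ge0 beta_le1 D_le cost_le.
have [beta0|beta_neq0] := eqVneq beta 0.
  have cost0 : wcost d w b C = 0.
    by apply: le_anti; rewrite wcost_ge0 andbT; move: cost_le; rewrite beta0 expr0n mul0r.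
  by rewrite beta0 subr0 expr1n mul1r (le_trans D_le) ?wcost_le_objective.
have beta_gt0 : 0 < beta by rewrite lt0r beta_neq0.
have p_ge0 : 0 <= 1 - beta by rewrite subr_ge0.
have := wcost_interpolate a b C p_ge0 beta_ge0 (subrK beta 1).
have pbeta_ge0 : 0 <= (1 - beta) * beta by rewrite mulr_ge0.
have := ler_wpM2l pbeta_ge0 D_le; have := ler_wpM2l p_ge0 cost_le.
rewrite -(ler_pM2l beta_gt0); nra.
Qed.

End WeightedCosts.

Theorem lemma1 (R : realType) (X : Type) (d : X -> X -> R)
  (hd : is_metric d) (hbary : barycenter_property d)
  (K : nat) (hK : (1 <= K)%N) (w : 'I_K -> R) (hw : in_simplex w)
  (a : 'I_K -> X) (Ca : X) (hCa : is_barycenter d w a Ca)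
  (alpha : R) (halpha : 0 <= alpha <= 1) (b : 'I_K -> X)
  (hb1 : forall s, d (a s) Ca = d (a s) (b s) + d (b s) Ca)
  (hb2 : forall s, d (b s) (a s) = (1 - Num.sqrt alpha) * d (a s) Ca) :
  solves d w a (alpha * wcost d w a Ca) b.
Proof.
have [_ _ d_sym _] := hd; have [w_ge0 _] := hw.
case/andP: halpha => alpha_ge0 alpha_le1.
set beta := Num.sqrt alpha in hb2 *.
have beta2 : beta ^+ 2 = alpha by rewrite sqr_sqrtr.
have beta_range : 0 <= beta <= 1 by rewrite sqrtr_ge0 -sqrtr1 ler_sqrt ?ler01.
have hbC s : d (b s) Ca = beta * d (a s) Ca.
  by have := hb1 s; rewrite [d (a s) (b s)]d_sym hb2; lra.
split.
  have [C baryC] := hbary K hK w b hw.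
  exists C; split => //; apply: (le_trans (baryC Ca)).
  by rewrite /wcost (sum_sqr_scale w hbC) beta2.
move=> b' [C' [_ cost_le]].
rewrite [objective _ _ _ b](sum_sqr_scale w hb2); rewrite -beta2 in cost_le.
exact: (objective_lower_bound hd w_ge0 a b' C' beta_range (hCa C') cost_le).
Qed.
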